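(* Under the hypotheses and with the construction of the context (in particular $\lambda>0$ not a fusion value and $\|\boldsymbol\delta'_{ij}\|\le\lambda_1<\lambda$), the constructed primal–dual pair is strictly complementary: $$t_{ij}+\lambda>\|\mathbf y_{ij}+\boldsymbol\delta_{ij}\|\ \ (1\le i<j\le n),\qquad s_i+1-\gamma_i>\left\|\begin{pmatrix}\mathbf z_i+\boldsymbol\beta_i\\ u_i+\gamma_i\end{pmatrix}\right\|\ \ (1\le i\le n).$$
   Context: Data: $n\ge2$, $d\ge1$, $\mathbf a_i\in\mathbb R^d$, $r_i>0$. For $\lambda\ge0$, (P$_\lambda$): minimize $\frac12\sum_ir_i\|\mathbf x_i-\mathbf a_i\|^2+\lambda\sum_{i<j}r_ir_j\|\mathbf x_i-\mathbf x_j\|$; unique minimizer $\mathbf x^*(\lambda)$, whose clusters are the classes of $i\sim j\iff\mathbf x_i^*(\lambda)=\mathbf x_j^*(\lambda)$. $\lambda_0>0$ is a fusion value if some $i\ne j$ have $\mathbf x_i^*(\lambda_0)=\mathbf x_j^*(\lambda_0)$ but $\mathbf x_i^*(\lambda)\ne\mathbf x_j^*(\lambda)$ for all $\lambda<\lambda_0$. Fix $\lambda>0$ not a fusion value; $\lambda_1$ is the largest fusion value below $\lambda$ (or $0$); $C_1,\dots,C_K$ are the clusters of $\mathbf x^*(\lambda_1)$. $r'_k:=\sum_{i\in C_k}r_i$, $\bar{\mathbf a}_k:=\frac1{r'_k}\sum_{i\in C_k}r_i\mathbf a_i$; $(\hat{\mathbf x}_1,\dots,\hat{\mathbf x}_K)$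 is the minimizer of $\frac12\sum_kr'_k\|\mathbf x_k-\bar{\mathbf a}_k\|^2+\lambda\sum_{k<k'}r'_kr'_{k'}\|\mathbf x_k-\mathbf x_{k'}\|$. Antisymmetric notation $\mathbf v_{\langle ij\rangle}=\mathbf v_{ij}$ ($i<j$), $-\mathbf v_{ji}$ ($i>j$), $\mathbf 0$ ($i=j$). Given vectors $\boldsymbol\delta'_{ij}$ for $i<j$ in a common cluster with $\|\boldsymbol\delta'_{ij}\|\le\lambda_1$ and $\mathbf a_i-\bar{\mathbf a}_k=-\sum_{j\in C_k}r_j\boldsymbol\delta'_{\langle ij\rangle}$ for $i\in C_k$, the construction is: $\mathbf x^*_i:=\hat{\mathbf x}_k$ ($i\in C_k$), $\mathbf y_{ij}:=\mathbf x_i^*-\mathbf x_j^*$, $\mathbf z_i:=\mathbf x_i^*-\mathbf a_i$, $s_i:=\frac12(1+\|\mathbf z_i\|^2)$, $u_i:=\frac12(-1+\|\mathbf z_i\|^2)$, $t_{ij}:=\|\mathbf y_{ij}\|$, $\boldsymbol\delta_{ij}:=\boldsymbol\delta'_{ij}$ for same-cluster pairs and $\lambda(\mathbf x_j^*-\mathbf x_i^* )/\|\mathbf x_j^*-\mathbf x_i^*\|$ otherwise, $\boldsymbol\beta_i:=-\mathbf z_i$, $\gamma_i:=\frac12(1-\|\boldsymbol\beta_i\|^2)$. *)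

From HB Require Import structures.
From mathcomp Require Import all_boot all_order all_algebra.
From mathcomp Require Import reals.
Set Implicit Arguments. Unset Strict Implicit. Unset Printing Implicit Defensive.
Import Order.TTheory GRing.Theory Num.Theory.
Local Open Scope ring_scope.

Section Defs.
Variable R : realType.

Definition enorm (m : nat) (v : 'rV[R]_m) : R :=
  Num.sqrt (\sum_(i < m) v ord0 i ^+ 2).

Definition Pobj (n d : nat) (a : 'I_n -> 'rV[R]_d) (r : 'I_n -> R) (lam : R)
    (x : 'I_n -> 'rV[R]_d) : R :=
  2^-1 * (\sum_(i < n) r i * enorm (x i - a i) ^+ 2)
  + lam * (\sum_(i < n) \sum_(j < n | (i < j)%N) r i * r j * enorm (x i - x j)).

Definition is_minimizer (T : Type) (f : T -> R) (x : T) : Prop :=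
  forall y, f x <= f y.

Definition fusion_value (n d : nat) (xs : R -> 'I_n -> 'rV[R]_d) (lam0 : R) : Prop :=
  0 < lam0 /\
  exists i j : 'I_n, i != j /\ xs lam0 i = xs lam0 j /\
    (forall lam, 0 <= lam -> lam < lam0 -> xs lam i <> xs lam j).

Definition largest_fusion_below (n d : nat) (xs : R -> 'I_n -> 'rV[R]_d)
    (lam lam1 : R) : Prop :=
  (lam1 = 0 /\ forall mu, 0 < mu -> mu < lam -> ~ fusion_value xs mu) \/
  (fusion_value xs lam1 /\ lam1 < lam /\
     forall mu, lam1 < mu -> mu < lam -> ~ fusion_value xs mu).

(* cluster data: c i = k  iff  i in C_k *)
Definition rprime (n K : nat) (r : 'I_n -> R) (c : 'I_n -> 'I_K) (k : 'I_K) : R :=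
  \sum_(i < n | c i == k) r i.

Definition abar (n d K : nat) (a : 'I_n -> 'rV[R]_d) (r : 'I_n -> R)
    (c : 'I_n -> 'I_K) (k : 'I_K) : 'rV[R]_d :=
  (rprime r c k)^-1 *: \sum_(i < n | c i == k) r i *: a i.

Definition Qobj (n d K : nat) (a : 'I_n -> 'rV[R]_d) (r : 'I_n -> R)
    (c : 'I_n -> 'I_K) (lam : R) (x : 'I_K -> 'rV[R]_d) : R :=
  2^-1 * (\sum_(k < K) rprime r c k * enorm (x k - abar a r c k) ^+ 2)
  + lam * (\sum_(k < K) \sum_(k' < K | (k < k')%N)
             rprime r c k * rprime r c k' * enorm (x k - x k')).

Definition anti (n : nat) (V : zmodType) (v : 'I_n -> 'I_n -> V) (i j : 'I_n) : V :=
  if (i < j)%N then v i j else if (j < i)%N then - v j i else 0.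

Section Construction.
Variables (n d K : nat) (a : 'I_n -> 'rV[R]_d) (c : 'I_n -> 'I_K)
  (xhat : 'I_K -> 'rV[R]_d) (deltap : 'I_n -> 'I_n -> 'rV[R]_d) (lam : R).

Definition xst (i : 'I_n) : 'rV[R]_d := xhat (c i).
Definition yv (i j : 'I_n) : 'rV[R]_d := xst i - xst j.
Definition zv (i : 'I_n) : 'rV[R]_d := xst i - a i.
Definition sv (i : 'I_n) : R := 2^-1 * (1 + enorm (zv i) ^+ 2).
Definition uv (i : 'I_n) : R := 2^-1 * (-1 + enorm (zv i) ^+ 2).
Definition tv (i j : 'I_n) : R := enorm (yv i j).
Definition deltav (i j : 'I_n) : 'rV[R]_d :=
  if c i == c j then deltap i j
  else (lam / enorm (xst j - xst i)) *: (xst j - xst i).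
Definition betav (i : 'I_n) : 'rV[R]_d := - zv i.
Definition gammav (i : 'I_n) : R := 2^-1 * (1 - enorm (betav i) ^+ 2).
End Construction.

End Defs.

From HB Require Import structures.
From mathcomp Require Import all_boot all_order all_algebra.
From mathcomp Require Import reals.
From mathcomp Require Import lra.
Set Implicit Arguments. Unset Strict Implicit. Unset Printing Implicit Defensive.
Import Order.TTheory GRing.Theory Num.Theory.
Local Open Scope ring_scope.

(* The pair condition  t_ij + lam > ||y_ij + delta_ij||  is checked separately
   for the two kinds of pairs:
   - i, j in a common cluster: y_ij = 0, and ||delta_ij|| = ||delta'_ij||
     <= lam1 < lam, where lam1 < lam holds because lam1 is a fusion value
     below lam (or 0 < lam);
   - i, j in different clusters: with w = y_ij, delta_ij = -(lam/||w||) w, so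
     y_ij + delta_ij = (1 - lam/||w||) w has norm | ||w|| - lam | < ||w|| + lam.
   The vertex condition is an identity: beta_i = -z_i and u_i + gamma_i = 0,
   so the left-hand side vanishes while s_i + 1 - gamma_i = 1 + ||z_i||^2 > 0.
   We first record the needed properties of the Euclidean norm [enorm], then
   the three estimates above, and derive the theorem from them. *)

Section EuclideanNorm.
Variables (R : realType) (m : nat).

Lemma enormZ (k : R) (v : 'rV[R]_m) : enorm (k *: v) = `|k| * enorm v.
Proof.
rewrite /enorm.
have -> : \sum_(i < m) (k *: v) ord0 i ^+ 2 = k ^+ 2 * \sum_(i < m) v ord0 i ^+ 2.
  by rewrite mulr_sumr; apply: eq_bigr => i _; rewrite mxE exprMn.
by rewrite sqrtrM ?sqrtr_sqr // sqr_ge0.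
Qed.

Lemma enorm0 : enorm (0 : 'rV[R]_m) = 0.
Proof. by have := enormZ 0 0; rewrite scale0r normr0 mul0r. Qed.

Lemma enormN (v : 'rV[R]_m) : enorm (- v) = enorm v.
Proof. by rewrite -scaleN1r enormZ normrN normr1 mul1r. Qed.

Lemma enorm_ge0 (v : 'rV[R]_m) : 0 <= enorm v.
Proof. exact: sqrtr_ge0. Qed.

(* Moving w a distance lam > 0 towards the origin along its own direction
   lands strictly inside the ball of radius ||w|| + lam: the result is
   (1 - lam/||w||) w, of norm | ||w|| - lam |.  (For w = 0 the step is 0.) *)
Lemma enorm_shrink_lt (lam : R) (w : 'rV[R]_m) :
  0 < lam -> enorm (w - (lam / enorm w) *: w) < enorm w + lam.
Proof.
move=> lam_gt0; rewrite -{1}(scale1r w) -scalerBl enormZ.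
have [w0|w_neq0] := eqVneq (enorm w) 0.
  by rewrite w0 mulr0 add0r.
have w_gt0 : 0 < enorm w by rewrite lt0r w_neq0 enorm_ge0.
rewrite -[X in _ < X + _]mul1r -[X in _ < _ + X](mulfVK (lt0r_neq0 w_gt0)).
rewrite -mulrDl ltr_pM2r // ltr_norml.
have q_gt0 : 0 < lam / enorm w by rewrite divr_gt0.
apply/andP; split; lra.
Qed.

End EuclideanNorm.

Lemma largest_fusion_below_lt (R : realType) (n d : nat)
    (xs : R -> 'I_n -> 'rV[R]_d) (lam lam1 : R) :
  0 < lam -> largest_fusion_below xs lam lam1 -> lam1 < lam.
Proof. by move=> lam_gt0 [[-> _]|[_ [lt_lam1 _]]]. Qed.

Section Construction.
Variables (R : realType) (n d K : nat) (a : 'I_n -> 'rV[R]_d)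
  (c : 'I_n -> 'I_K) (xhat : 'I_K -> 'rV[R]_d)
  (deltap : 'I_n -> 'I_n -> 'rV[R]_d).

Lemma pair_strict (lam : R) (i j : 'I_n) :
  0 < lam -> (c i = c j -> enorm (deltap i j) < lam) ->
  enorm (yv c xhat i j + deltav c xhat deltap lam i j) < tv c xhat i j + lam.
Proof.
move=> lam_gt0 hdel; rewrite /deltav /tv /yv /xst.
case: eqP => [same|_].
  by rewrite same subrr add0r enorm0 add0r hdel.
rewrite -[xhat (c j) - _]opprB enormN scalerN.
exact: enorm_shrink_lt.
Qed.

Lemma vertex_residual0 (i : 'I_n) :
  row_mx (zv a c xhat i + betav a c xhat i)
         (uv a c xhat i + gammav a c xhat i)%:M = 0.
Proof.
rewrite /betav /gammav /uv enormN subrr.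
have -> : 2^-1 * (-1 + enorm (zv a c xhat i) ^+ 2)
          + 2^-1 * (1 - enorm (zv a c xhat i) ^+ 2) = 0 :> R by lra.
by rewrite -scalemx1 scale0r row_mx0.
Qed.

Lemma vertex_slack_gt0 (i : 'I_n) :
  0 < sv a c xhat i + 1 - gammav a c xhat i.
Proof.
rewrite /sv /gammav /betav enormN.
have := sqr_ge0 (enorm (zv a c xhat i)); lra.
Qed.

End Construction.

Theorem lemma6p5 (R : realType) (n d : nat) (a : 'I_n -> 'rV[R]_d) (r : 'I_n -> R)
  (xs : R -> 'I_n -> 'rV[R]_d) (lam lam1 : R) (K : nat) (c : 'I_n -> 'I_K)
  (xhat : 'I_K -> 'rV[R]_d) (deltap : 'I_n -> 'I_n -> 'rV[R]_d) :
  (2 <= n)%N -> (1 <= d)%N ->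
  (forall i, 0 < r i) ->
  (* xs mu is the (unique) minimizer of (P_mu) for every mu >= 0 *)
  (forall mu, 0 <= mu -> is_minimizer (Pobj a r mu) (xs mu)) ->
  0 < lam -> ~ fusion_value xs lam ->
  largest_fusion_below xs lam lam1 ->
  (* C_1, ..., C_K are the clusters of xs lam1 : i in C_k iff c i = k *)
  (forall k : 'I_K, exists i, c i = k) ->
  (forall i j, c i = c j <-> xs lam1 i = xs lam1 j) ->
  (* xhat is the minimizer of the reduced problem *)
  is_minimizer (Qobj a r c lam) xhat ->
  (forall i j : 'I_n, (i < j)%N -> c i = c j -> enorm (deltap i j) <= lam1) ->
  (forall i : 'I_n, a i - abar a r c (c i) =
      - \sum_(j < n | c j == c i) r j *: anti deltap i j) ->
  (forall i j : 'I_n, (i < j)%N ->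
      enorm (yv c xhat i j + deltav c xhat deltap lam i j) < tv c xhat i j + lam) /\
  (forall i : 'I_n,
      enorm (row_mx (zv a c xhat i + betav a c xhat i)
                    (uv a c xhat i + gammav a c xhat i)%:M)
      < sv a c xhat i + 1 - gammav a c xhat i).
Proof.
move=> _ _ _ _ lam_gt0 _ hfus _ _ _ hdel _.
have lam1_lt : lam1 < lam := largest_fusion_below_lt lam_gt0 hfus.
split=> [i j lt_ij|i].
  apply: pair_strict => // same.
  exact: le_lt_trans (hdel i j lt_ij same) lam1_lt.
by rewrite vertex_residual0 enorm0 vertex_slack_gt0.
Qed.
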